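(* (Compactness and countable models.) Let $A$ be a branch such that every finite subset of $A$ is satisfiable. Then $A$ has a model $\mathcal{I}$ such that $\mathcal{I}\sigma$ is countable for every type $\sigma$.
   Context: Types: a countable set of base types including a distinguished $o$; other base types are sorts. Types: base types and $\sigma\tau$ (functions from $\sigma$ to $\tau$; $\sigma\tau\mu=\sigma(\tau\mu)$). Countably many names, each with a unique type, infinitely many of each type. Terms: names; $st:\mu$ for $s:\tau\mu,t:\tau$; $\lambda x.t:\sigma\tau$ for a name $x:\sigma$, $t:\tau$. Logical constants: $\neg:oo$, $=_\sigma:\sigma\sigma o$; other names are variables. Formulas: terms of type $o$. Semantics: a frame $\mathcal{D}$ maps types to nonempty sets with $\mathcal{D}(\sigma\tau)\subseteq(\mathcal{D}\sigma\to\mathcal{D}\tau)$. An assignment $\mathcal{I}$ into $\mathcal{D}$ extends $\mathcal{D}$ and maps names $x:\sigma$ into $\mathcal{D}\sigma$; $\mathcal{I}^x_a$ is the update. Partial evaluation: $\hat{\mathcal{I}}x=\mathcal{I}x$; $\hat{\mathcal{I}}(st)=(\hat{\mathcal{I}}s)(\hat{\mathcal{I}}t)$ when defined; $\hat{\mathcal{I}}(\lambda x.s)=f$ if $\lambda x.s:\sigma\tau$, $f\in\mathcal{D}(\sigma\tau)$ and $\widehat{\mathcal{I}^x_a}s=fa$ for all $a\in\mathcal{D}\sigma$. Interpretation: assignment with total evaluation. Logical: $\mathcal{I}o=\{0,1\}$, $\mathcal{I}(\neg)$ negation, $\mathcal{I}(=_\sigma)$ identity on $\mathcal{I}\sigma$.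 A model of a set of formulas is a logical interpretation evaluating each to $1$; satisfiable = has a model. Normalization: fixed type-preserving total $[\cdot]$; $s$ normal iff $[s]=s$; (N1) $[[s]]=[s]$; (N2) $[[s]t]=[st]$; (N3) $[xs_1\dots s_n]=x[s_1]\dots[s_n]$ for a name $x$, $n\ge0$, $xs_1\dots s_n$ of base type; (N4) $\hat{\mathcal{I}}[s]=\hat{\mathcal{I}}s$ for every interpretation. Substitutions: type-preserving partial functions $\theta$ from names to terms ($\theta^x_s$ update), each extending to a type-preserving total $\hat\theta$ with (S1) $\hat\theta x=\theta x$ if $x\in\mathrm{Dom}\theta$, else $x$; (S2) $\hat\theta(st)=(\hat\theta s)(\hat\theta t)$; (S3) $[(\hat\theta(\lambda x.s))t]=[\widehat{\theta^x_t}s]$; (S4) $[\hat\emptyset s]=[s]$. A branch is a set of normal formulas. *)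

From mathcomp Require Import ssreflect ssrfun ssrbool eqtype choice.
From Stdlib Require Import List.
Set Implicit Arguments.
Unset Strict Implicit.

Section STT.
Variable S : countType.

(* Types: o, sorts, and function types  Arr s t  (written  s t  in the paper). *)
Inductive ty : Type := Bo | Bs (s : S) | Arr (a b : ty).

Definition ty_eq_dec (a b : ty) : {a = b} + {a <> b}.
Proof. decide equality. exact: eq_comparable. Defined.

Inductive name : Type := Neg | Eqc (a : ty) | Var (a : ty) (n : nat).

Definition name_eq_dec (x y : name) : {x = y} + {x <> y}.
Proof. decide equality; first [exact: ty_eq_dec | exact: PeanoNat.Nat.eq_dec]. Defined.

Definition nty (x : name) : ty :=
  match x with
  | Neg => Arr Bo Bo
  | Eqc a => Arr a (Arr a Bo)
  | Var a _ => a
  end.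

Inductive tm : ty -> Type :=
| Nm (x : name) : tm (nty x)
| App (a b : ty) : tm (Arr a b) -> tm a -> tm b
| Lam (x : name) (b : ty) : tm b -> tm (Arr (nty x) b).

(* Frames: nonempty domains, with D(a b) a set of functions D a -> D b
   (represented by an extensional application map). *)
Record frame := Frame {
  dom : ty -> Type;
  app : forall a b, dom (Arr a b) -> dom a -> dom b;
  app_ext : forall a b (f g : dom (Arr a b)), (forall v, app f v = app g v) -> f = g;
  dom_ne : forall a, inhabited (dom a)
}.

Definition assignment (D : frame) := forall x : name, dom D (nty x).

Definition upd (D : frame) (I : assignment D) (x : name) (v : dom D (nty x))
  : assignment D :=
  fun y => match name_eq_dec x y with
           | left e => eq_rect x (fun z => dom D (nty z)) v y e
           | right _ => I y
           end.

(* Partial evaluation, as a (functional) relation. *)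
Inductive ev (D : frame) : assignment D -> forall a, tm a -> dom D a -> Prop :=
| ev_nm (I : assignment D) (x : name) : ev I (Nm x) (I x)
| ev_app (I : assignment D) a b (s : tm (Arr a b)) (t : tm a) f v :
    ev I s f -> ev I t v -> ev I (App s t) (@app D a b f v)
| ev_lam (I : assignment D) (x : name) b (s : tm b) (f : dom D (Arr (nty x) b)) :
    (forall v, ev (@upd D I x v) s (@app D _ _ f v)) -> ev I (Lam x s) f.

Definition interpretation (D : frame) (I : assignment D) : Prop :=
  forall a (t : tm a), exists v, ev I t v.

(* Logical: D o = {0,1} (via the bijection tv), neg is negation, Eqc a is identity. *)
Definition logical (D : frame) (I : assignment D) (tv : dom D Bo -> bool) : Prop :=
  bijective tv /\
  (forall v, tv (@app D Bo Bo (I Neg) v) = negb (tv v)) /\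
  (forall a (u w : dom D a),
      tv (@app D a Bo (@app D a (Arr a Bo) (I (Eqc a)) u) w) = true <-> u = w).

Definition is_model (D : frame) (I : assignment D) (A : tm Bo -> Prop) : Prop :=
  interpretation I /\
  exists tv, logical I tv /\ (forall s, A s -> forall v, ev I s v -> tv v = true).

Definition satisfiable (A : tm Bo -> Prop) : Prop :=
  exists (D : frame) (I : assignment D), is_model I A.

Definition is_base (a : ty) : Prop :=
  match a with Arr _ _ => False | _ => True end.

Fixpoint head_is_name a (t : tm a) : Prop :=
  match t with
  | Nm _ => True
  | App _ _ s _ => head_is_name s
  | Lam _ _ _ => False
  end.

Fixpoint normargs (nf : forall a, tm a -> tm a) a (t : tm a) : tm a :=
  match t in tm a0 return tm a0 with
  | Nm x => Nm x
  | App a0 b0 s u => App (normargs nf s) (nf a0 u)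
  | Lam x b s => Lam x s
  end.

Definition normalization (nf : forall a, tm a -> tm a) : Prop :=
  (forall a (s : tm a), nf a (nf a s) = nf a s) /\
  (forall a b (s : tm (Arr a b)) (t : tm a),
      nf b (App (nf _ s) t) = nf b (App s t)) /\
  (forall a (t : tm a), is_base a -> head_is_name t -> nf a t = normargs nf t) /\
  (forall (D : frame) (I : assignment D), interpretation I ->
     forall a (s : tm a) (v : dom D a), ev I (nf a s) v <-> ev I s v).

Definition subst := forall x : name, option (tm (nty x)).

Definition subst_empty : subst := fun _ => None.

Definition supd (th : subst) (x : name) (t : tm (nty x)) : subst :=
  fun y => match name_eq_dec x y with
           | left e => Some (eq_rect x (fun z => tm (nty z)) t y e)
           | right _ => th y
           end.

Definition hat_spec (nf : forall a, tm a -> tm a)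
    (hat : subst -> forall a, tm a -> tm a) : Prop :=
  (forall th x, hat th _ (Nm x) =
     match th x with Some t => t | None => Nm x end) /\
  (forall th a b (s : tm (Arr a b)) (t : tm a),
     hat th b (App s t) = App (hat th _ s) (hat th a t)) /\
  (forall th x b (s : tm b) (t : tm (nty x)),
     nf b (App (hat th _ (Lam x s)) t) = nf b (hat (@supd th x t) b s)) /\
  (forall a (s : tm a), nf a (hat subst_empty a s) = nf a s).

Definition branch (nf : forall a, tm a -> tm a) (A : tm Bo -> Prop) : Prop :=
  forall s, A s -> nf Bo s = s.

Definition countable_type (T : Type) : Prop :=
  exists f : T -> nat, injective f.

End STT.

From Pilot Require Import Defs.
From mathcomp Require Import ssreflect ssrfun ssrbool eqtype choice.
From Stdlib Require Import List Lia Arith ClassicalEpsilon FunctionalExtensionality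
  ProofIrrelevance PropExtensionality Eqdep_dec.
Set Implicit Arguments.
Unset Strict Implicit.

(* Henkin's construction.  Renaming each variable [Var a n] of [A] to [Var a (2n)]
   frees the odd-indexed variables.  Running through all formulas and all pairs of
   functions [f, g], extend the renamed branch to a finitely satisfiable set [Th] that
   contains [p] or [neg p] for every formula [p] and that, whenever it contains
   [f <> g], also contains [f c <> g c] for some fresh odd variable [c].  Terms modulo
   [Th]-provable equality then form a frame, extensional thanks to the witnesses; a
   term evaluates under a substitution [th] to the class of [hat th t] (axioms S1-S4),
   so the canonical assignment is an interpretation whose true formulas are exactly
   those of [Th].  Each domain is a quotient of a countable set of terms. *)

Section Evaluation.
Variables (S : countType) (D : frame S).
Implicit Types (I J : assignment D).

Definition ev_inversion I a (t : tm a) : dom D a -> Prop :=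
  match t in tm a return dom D a -> Prop with
  | Nm x => fun w => w = I x
  | App a b s u => fun w => exists f v, ev I s f /\ ev I u v /\ w = Defs.app f v
  | Lam x b s => fun f => forall v, ev (upd I (x:=x) v) s (Defs.app f v)
  end.

Lemma ev_inv I a (t : tm a) w : ev I t w -> ev_inversion I t w.
Proof. by case=> //= {}I a' b s u f v Hs Hu; exists f, v. Qed.

Lemma ev_functional I a (t : tm a) v w : ev I t v -> ev I t w -> v = w.
Proof.
move=> Hv; elim: Hv w => {I a t v}.
- by move=> I x w /ev_inv.
- move=> I a b s t f v _ IHs _ IHt w /ev_inv [f' [v' [Hs [Ht ->]]]].
  by rewrite (IHs _ Hs) (IHt _ Ht).
- by move=> I x b s f _ IH w /ev_inv Hw; apply: app_ext => v; apply: IH.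
Qed.

Lemma upd_eq I x v : upd I (x:=x) v x = v.
Proof.
rewrite /upd; case: (name_eq_dec x x) => [e|//].
by rewrite (UIP_dec (@name_eq_dec S) e erefl).
Qed.

Lemma upd_neq I x v y : x <> y -> upd I (x:=x) v y = I y.
Proof. by rewrite /upd; case: (name_eq_dec x y). Qed.

Fixpoint vars a (t : tm a) : list (name S) :=
  match t with
  | Nm x => x :: nil
  | App _ _ s u => vars s ++ vars u
  | Lam x _ s => x :: vars s
  end.

Lemma ev_agree I J a (t : tm a) w :
  (forall y, In y (vars t) -> I y = J y) -> ev I t w -> ev J t w.
Proof.
elim: t I J w => [x|a' b s IHs u IHu|x b s IHs] I J w IJ /ev_inv /=.
- by move=> ->; rewrite IJ /=; [apply: ev_nm | left].
- move=> [f [v [Hs [Hu ->]]]]; apply: ev_app.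
  + by apply: IHs Hs => y Hy; apply: IJ; apply: in_or_app; left.
  + by apply: IHu Hu => y Hy; apply: IJ; apply: in_or_app; right.
- move=> Hs; apply: ev_lam => v; apply: IHs (Hs v) => y Hy.
  case: (name_eq_dec x y) => [<-|xy]; first by rewrite !upd_eq.
  by rewrite !upd_neq // IJ //; right.
Qed.

Lemma ev_upd_fresh I x v a (t : tm a) w :
  ~ In x (vars t) -> ev (upd I (x:=x) v) t w <-> ev I t w.
Proof.
move=> xt; have Hy y : In y (vars t) -> upd I (x:=x) v y = I y.
  by move=> Hy; rewrite upd_neq // => xy; apply: xt; rewrite xy.
by split; apply: ev_agree => y /Hy.
Qed.

Lemma interpretation_upd I x v : interpretation I -> interpretation (upd I (x:=x) v).
Proof. by move=> HI a t; have [f /ev_inv Hf] := HI _ (Lam x t); exists (Defs.app f v). Qed.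

(* Totality of evaluation depends only on the frame: to evaluate [t] under [J], evaluate
   it under [I] overwritten with [J] on the variables of [t]. *)
Lemma interpretation_any I J : interpretation I -> interpretation J.
Proof.
move=> HI a t.
pose K := fold_right (fun y K => upd K (x:=y) (J y)) I (vars t).
have HK : interpretation K.
  by rewrite /K; elim: (vars t) => //= y l; apply: interpretation_upd.
have KJ l : forall y, In y l -> fold_right (fun y K => upd K (x:=y) (J y)) I l y = J y.
  elim: l => [|z l IH] y //= [<-|Hy]; first by rewrite upd_eq.
  by case: (name_eq_dec z y) => [<-|zy]; [rewrite upd_eq | rewrite upd_neq // IH].
by have [w Hw] := HK _ t; exists w; apply: ev_agree Hw; apply: KJ.
Qed.

Definition neg (s : tm (Bo S)) : tm (Bo S) := @App S (Bo S) (Bo S) (Nm (Neg S)) s.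

Definition eqt a (s t : tm a) : tm (Bo S) :=
  @App S a (Bo S) (@App S a (Arr a (Bo S)) (Nm (Eqc a)) s) t.

Definition holds I (tv : dom D (Bo S) -> bool) (s : tm (Bo S)) : Prop :=
  forall w, ev I s w -> tv w = true.

Lemma holds_ev I tv s w : ev I s w -> holds I tv s <-> tv w = true.
Proof. by move=> Hw; split=> [|Htv w' Hw']; [apply | rewrite -(ev_functional Hw Hw')]. Qed.

Lemma holds_neg I tv s :
  interpretation I -> logical I tv -> holds I tv (neg s) <-> ~ holds I tv s.
Proof.
move=> HI [_ [Hneg _]]; have [w Hw] := HI _ s.
have Hnw : ev I (neg s) (Defs.app (I (Neg S)) w).
  by apply: ev_app; [apply: (ev_nm I (Neg S)) |].
by rewrite (holds_ev _ Hw) (holds_ev _ Hnw) Hneg; case: (tv w).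
Qed.

Lemma holds_eqt I tv a (s t : tm a) u v :
  logical I tv -> ev I s u -> ev I t v -> holds I tv (eqt s t) <-> u = v.
Proof.
move=> [_ [_ Heq]] Hs Ht; rewrite -(Heq a u v); apply: holds_ev.
by apply: ev_app => //; apply: ev_app => //; apply: (ev_nm I (Eqc a)).
Qed.

Lemma eq_of_holds_eqt I tv a (s t : tm a) u v :
  logical I tv -> ev I s u -> ev I t v -> holds I tv (eqt s t) -> u = v.
Proof. by move=> Hlog Hu Hv /(holds_eqt Hlog Hu Hv). Qed.

Lemma logical_tv_inj I tv : logical I tv -> injective tv.
Proof. by case=> /bij_inj. Qed.

Lemma logical_transfer I J tv :
  J (Neg S) = I (Neg S) -> (forall a, J (Eqc a) = I (Eqc a)) ->
  logical I tv -> logical J tv.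
Proof. by move=> JN JE [Htv [Hneg Heq]]; split=> //; split=> [v|a u w]; rewrite ?JN ?JE. Qed.

Lemma is_model_sub I P Q : (forall s, Q s -> P s) -> is_model I P -> is_model I Q.
Proof. by move=> QP [HI [tv [Hlog Hh]]]; split=> //; exists tv; split=> // s /QP /Hh. Qed.

End Evaluation.

Section FiniteSatisfiability.
Variable S : countType.
Implicit Types (P Q : tm (Bo S) -> Prop) (p : tm (Bo S)).

Definition fin_sat P : Prop :=
  forall l, (forall s, In s l -> P s) -> satisfiable (fun s => In s l).

Definition extend P p : tm (Bo S) -> Prop := fun s => P s \/ s = p.

Lemma fin_sat_sub P Q : (forall s, Q s -> P s) -> fin_sat P -> fin_sat Q.
Proof. by move=> QP HP l Hl; apply: HP => s /Hl /QP. Qed.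

Lemma list_extend_split P p l : (forall s, In s l -> extend P p s) ->
  exists l', (forall s, In s l' -> P s) /\ forall s, In s l -> In s (p :: l').
Proof.
elim: l => [|s l IH] Hl; first by exists nil.
have [l' [l'P ll']] := IH (fun s' Hs' => Hl s' (or_intror Hs')).
case: (Hl s (or_introl erefl)) => [Ps|->].
- exists (s :: l'); split=> [s' /= [<-|/l'P]|s' /= [<-|/ll' /= [|]]]; tauto.
- by exists l'; split=> // s' /= [<-|/ll']; [left|].
Qed.

Lemma fin_sat_extend P p : fin_sat P -> fin_sat (extend P p) \/ fin_sat (extend P (neg p)).
Proof.
move=> HP; case: (classic (fin_sat (extend P p))) => [|Hp]; [by left | right].
have [l1 [Hl1 Hunsat]] : exists l1, (forall s, In s l1 -> extend P p s) /\
    ~ satisfiable (fun s => In s l1).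
  by apply: NNPP => Hc; apply: Hp => l1 Hl1; apply: NNPP => Hn; apply: Hc; exists l1.
move=> l2 Hl2.
have [l1' [Hl1'P l1l1']] := list_extend_split Hl1.
have [l2' [Hl2'P l2l2']] := list_extend_split Hl2.
have [D [I [HI [tv [Hlog Hh]]]]] : satisfiable (fun s => In s (l1' ++ l2')).
  by apply: HP => s /in_app_iff [/Hl1'P|/Hl2'P].
have Hl' s : In s l1' \/ In s l2' -> holds I tv s by move/in_app_iff; apply: Hh.
case: (classic (holds I tv p)) => Hp'.
- case: Hunsat; exists D, I; split=> //; exists tv; split=> // s /l1l1' [<-|Hs] //.
  by apply: Hl'; left.
- exists D, I; split=> //; exists tv; split=> // s /l2l2' [<-|Hs].
  + exact/(holds_neg _ HI Hlog).
  + by apply: Hl'; right.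
Qed.

Lemma fin_sat_witness P a b (f g : tm (Arr a b)) k (c := Var a k) :
  fin_sat (extend P (neg (eqt f g))) ->
  (forall s, P s -> ~ In c (vars s)) -> ~ In c (vars f) -> ~ In c (vars g) ->
  fin_sat (extend (extend P (neg (eqt f g)))
            (neg (eqt (App f (Nm c : tm a)) (App g (Nm c))))).
Proof.
move=> HP Pc fc gc l Hl.
have [l1 [Hl1 ll1]] := list_extend_split Hl.
have Hl1' : forall s, In s (neg (eqt f g) :: l1) -> extend P (neg (eqt f g)) s.
  by move=> s [<-|/Hl1 //]; right.
have [D [I [HI [tv [Hlog Hh]]]]] := HP _ Hl1'.
have [vf Hvf] := HI _ f; have [vg Hvg] := HI _ g.
have [v Hv] : exists v, Defs.app vf v <> Defs.app vg v.
  apply: NNPP => Hc; have /(holds_neg _ HI Hlog) := Hh _ (or_introl erefl); apply.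
  apply/(holds_eqt Hlog Hvf Hvg); apply: app_ext => v.
  by apply: NNPP => Hn; apply: Hc; exists v.
pose J := upd I (x:=c) v.
have HJ : interpretation J := interpretation_any J HI.
have HlogJ : logical J tv by apply: (logical_transfer _ _ Hlog) => *; rewrite /J upd_neq.
have Hc : ev J (Nm c : tm a) v by have := ev_nm J c; rewrite /J upd_eq.
have HfJ : ev J f vf by apply/ev_upd_fresh.
have HgJ : ev J g vg by apply/ev_upd_fresh.
exists D, J; split=> //; exists tv; split=> // s /ll1 [<-|Hs].
- apply/(holds_neg _ HJ HlogJ) => /(holds_eqt HlogJ (ev_app HfJ Hc) (ev_app HgJ Hc)).
  exact: Hv.
- have cs : ~ In c (vars s).
    by case: (Hl1 _ Hs) => [/Pc|->] //=; rewrite !in_app_iff /=; intuition discriminate.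
  by move=> w /ev_upd_fresh Hw; apply: (Hh s (or_intror Hs)); apply: Hw.
Qed.

End FiniteSatisfiability.

Section Countability.
Variable S : countType.

Fixpoint tree_of_ty (a : ty S) : GenTree.tree S :=
  match a with
  | Bo => GenTree.Node 0 nil
  | Bs s => GenTree.Leaf s
  | Arr a b => GenTree.Node 1 (tree_of_ty a :: tree_of_ty b :: nil)
  end.

Lemma tree_of_ty_inj : injective tree_of_ty.
Proof. by elim=> [|s|a IHa b IHb] [|s'|a' b'] //= [] => [->|/IHa -> /IHb ->]. Qed.

Definition tree_of_name (x : name S) : GenTree.tree S :=
  match x with
  | Neg => GenTree.Node 0 nil
  | Eqc a => GenTree.Node 1 (tree_of_ty a :: nil)
  | Var a n => GenTree.Node 2 (tree_of_ty a :: GenTree.Node n nil :: nil)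
  end.

Lemma tree_of_name_inj : injective tree_of_name.
Proof. by case=> [|a|a n] [|a'|a' n'] //= [] => [/tree_of_ty_inj ->|/tree_of_ty_inj -> ->]. Qed.

Fixpoint tree_of_tm a (t : tm a) : GenTree.tree S :=
  match t with
  | Nm x => GenTree.Node 0 (tree_of_name x :: nil)
  | App _ _ s u => GenTree.Node 1 (tree_of_tm s :: tree_of_tm u :: nil)
  | Lam x _ s => GenTree.Node 2 (tree_of_name x :: tree_of_tm s :: nil)
  end.

Lemma existT_tm_inj a (s t : tm a) : existT (@tm S) a s = existT (@tm S) a t -> s = t.
Proof. exact: (inj_pair2_eq_dec _ (@ty_eq_dec S)). Qed.

Lemma tree_of_tm_inj_dep a (s : tm a) b (t : tm b) :
  tree_of_tm s = tree_of_tm t -> existT (@tm S) a s = existT (@tm S) b t.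
Proof.
elim: s b t => [x|a0 b0 s IHs u IHu|x b0 s IHs] b [y|a1 b1 t t'|y b1 t] //= [].
- by move/tree_of_name_inj ->.
- move=> /IHs e1 /IHu e2; case: e1 (e1) => ea eb; subst => e1.
  by move: e1 e2 => /existT_tm_inj -> /existT_tm_inj ->.
- move=> /tree_of_name_inj <- /IHs e; case: e (e) => eb; subst => e.
  by move: e => /existT_tm_inj ->.
Qed.

Lemma tree_of_tm_inj a : injective (@tree_of_tm a).
Proof. by move=> s t /tree_of_tm_inj_dep /existT_tm_inj. Qed.

Lemma tm_countable (a : ty S) : countable_type (tm a).
Proof. by exists (fun t => pickle (tree_of_tm t)) => s t /(pcan_inj pickleK) /tree_of_tm_inj. Qed.

End Countability.

Lemma countable_enumeration (T : Type) :
  countable_type T -> exists e : nat -> option T, forall t, exists n, e n = Some t.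
Proof.
move=> [code code_inj].
exists (fun n => match excluded_middle_informative (exists t, code t = n) with
  | left Hn => Some (proj1_sig (constructive_indefinite_description _ Hn))
  | right _ => None end) => t.
exists (code t); case: excluded_middle_informative => [Hn|[]]; last by exists t.
by case: constructive_indefinite_description => t' /= /code_inj ->.
Qed.

Section Renaming.
Variable S : countType.

Definition ren_name (x : name S) : tm (nty x) :=
  match x return tm (nty x) with
  | Neg => Nm (Neg S)
  | Eqc a => Nm (Eqc a)
  | Var a n => Nm (Var a (2 * n))
  end.

Definition ren_lam (x : name S) b (s : tm b) : tm (Arr (nty x) b) :=
  match x return tm (Arr (nty x) b) with
  | Neg => Lam (Neg S) s
  | Eqc a => Lam (Eqc a) s
  | Var a n => Lam (Var a (2 * n)) s
  end.

Fixpoint ren a (t : tm a) : tm a :=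
  match t with
  | Nm x => ren_name x
  | App _ _ s u => App (ren s) (ren u)
  | Lam x _ s => ren_lam x (ren s)
  end.

Definition ren_image (P : tm (Bo S) -> Prop) : tm (Bo S) -> Prop :=
  fun s => exists s0, P s0 /\ s = ren s0.

Lemma ren_vars_even a (t : tm a) b n : In (Var b n) (vars (ren t)) -> Nat.Even n.
Proof.
elim: t => [x|a0 b0 s IHs u IHu|x b0 s IHs] /=.
- by case: x => [|c|c k] /= [e|//]; inversion e; exists k.
- by move/in_app_iff => [/IHs|/IHu].
- by case: x s IHs => [|c|c k] s IHs /= [e|/IHs //]; inversion e; exists k.
Qed.

Section RenamedAssignments.
Variable D : frame S.
Implicit Types (I J : assignment D).

Definition ren_related I J : Prop :=
  [/\ J (Neg S) = I (Neg S), forall a, J (Eqc a) = I (Eqc a)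
    & forall a n, J (Var a n) = I (Var a (2 * n))].

Lemma ren_related_upd_var I J a n (v : dom D a) : ren_related I J ->
  ren_related (upd I (x:=Var a (2 * n)) v) (upd J (x:=Var a n) v).
Proof.
move=> [JN JE JV]; split=> [|b|b m]; try by rewrite !upd_neq.
case: (name_eq_dec (Var a n) (Var b m)) => [[<- <-]|nm]; first by rewrite !upd_eq.
have nm2 : Var a (2 * n) <> Var b (2 * m).
  by case=> eb em; apply: nm; rewrite eb; congr Var; lia.
by rewrite !upd_neq.
Qed.

Lemma ren_related_upd_const I J x v : (forall a n, x <> Var a n) -> ren_related I J ->
  ren_related (upd I (x:=x) v) (upd J (x:=x) v).
Proof.
move=> xV [JN JE JV]; split=> [|b|b m]; last by rewrite !upd_neq.
- by case: (name_eq_dec x (Neg S)) => [<-|xy]; rewrite ?upd_eq ?upd_neq.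
- by case: (name_eq_dec x (Eqc b)) => [<-|xy]; rewrite ?upd_eq ?upd_neq.
Qed.

Lemma ev_ren_name I J x : ren_related I J -> ev I (ren_name x) (J x).
Proof.
case=> JN JE JV; case: x => [|c|c k]; rewrite ?JN ?JE ?JV.
- exact: (ev_nm I (Neg S)).
- exact: (ev_nm I (Eqc c)).
- exact: (ev_nm I (Var c (2 * k))).
Qed.

Lemma ev_ren I J a (t : tm a) w : ren_related I J -> ev I (ren t) w <-> ev J t w.
Proof.
elim: t I J w => [x|a0 b s IHs u IHu|x b s IHs] I J w IJ /=.
- split=> [Hw|/ev_inv ->]; last exact: ev_ren_name.
  by rewrite (ev_functional Hw (ev_ren_name x IJ)); apply: ev_nm.
- by split=> /ev_inv [f [v [/(IHs _ _ _ IJ) Hs [/(IHu _ _ _ IJ) Hu ->]]]]; apply: ev_app.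
- case: x s IHs w => [|c|c k] s IHs w; cbn [ren_lam].
  + have IH v : ev (upd I (x:=Neg S) v) (ren s) (Defs.app w v) <->
                ev (upd J (x:=Neg S) v) s (Defs.app w v).
      by apply: IHs; apply: ren_related_upd_const.
    by split=> /ev_inv H; apply: ev_lam => v; apply/IH.
  + have IH v : ev (upd I (x:=Eqc c) v) (ren s) (Defs.app w v) <->
                ev (upd J (x:=Eqc c) v) s (Defs.app w v).
      by apply: IHs; apply: ren_related_upd_const.
    by split=> /ev_inv H; apply: ev_lam => v; apply/IH.
  + have IH v : ev (upd I (x:=Var c (2 * k)) v) (ren s) (Defs.app w v) <->
                ev (upd J (x:=Var c k) v) s (Defs.app w v).
      by apply: IHs; apply: ren_related_upd_var.
    split=> /ev_inv H; last apply: (ev_lam (x:=Var c (2 * k))).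
    all: by [apply: ev_lam => v; apply/IH | move=> v; apply/IH].
Qed.

Lemma ren_related_from I : exists J, ren_related I J.
Proof.
exists (fun x => match x return dom D (nty x) with
  | Neg => I (Neg S) | Eqc a => I (Eqc a) | Var a n => I (Var a (2 * n)) end).
by split.
Qed.

Lemma ren_related_to J : exists I, ren_related I J.
Proof.
exists (fun x => match x return dom D (nty x) with
  | Neg => J (Neg S) | Eqc a => J (Eqc a) | Var a n => J (Var a (Nat.div2 n)) end).
by split=> // a n /=; rewrite Nat.div2_double.
Qed.

Lemma is_model_ren I J P : ren_related I J -> is_model I (ren_image P) <-> is_model J P.
Proof.
move=> IJ; have [JN JE _] := IJ.
split=> [[HI [tv [Hlog Hh]]]|[HJ [tv [Hlog Hh]]]].
- split; first exact: interpretation_any HI.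
  exists tv; split; first exact: logical_transfer Hlog.
  by move=> s Ps w /(ev_ren _ _ IJ); apply: Hh; exists s.
- split; first exact: interpretation_any HJ.
  exists tv; split; first by apply: logical_transfer Hlog.
  by move=> _ [s [Ps ->]] w /(ev_ren _ _ IJ); apply: Hh.
Qed.

End RenamedAssignments.

Lemma fin_sat_ren_image P : fin_sat P -> fin_sat (ren_image P).
Proof.
move=> HP l Hl.
have [l0 [Hl0 ll0]] : exists l0, (forall s, In s l0 -> P s) /\
    forall s, In s l -> ren_image (fun s0 => In s0 l0) s.
  elim: l Hl => [|s l IH] Hl; first by exists nil.
  have [l0 [Hl0 ll0]] := IH (fun s' Hs' => Hl s' (or_intror Hs')).
  have [s0 [Ps0 ->]] := Hl s (or_introl erefl).
  exists (s0 :: l0); split=> [s' /= [<-|/Hl0] //|s' /= [<-|/ll0 [s1 [Hs1 ->]]]].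
  + by exists s0; split=> //; left.
  + by exists s1; split=> //; right.
have [D [J HJ]] := HP l0 Hl0; have [I IJ] := ren_related_to J.
by exists D, I; apply: is_model_sub ll0 _; apply/(is_model_ren _ IJ).
Qed.

End Renaming.

Section Lindenbaum.
Variable S : countType.

Inductive task : Type :=
| Decide (p : tm (Bo S))
| Separate (a b : ty S) (f g : tm (Arr a b)).

Lemma task_countable : countable_type task.
Proof.
exists (fun t => pickle match t with
  | Decide p => GenTree.Node 0 (tree_of_tm p :: nil)
  | Separate _ _ f g => GenTree.Node 1 (tree_of_tm f :: tree_of_tm g :: nil) end).
move=> [p|a b f g] [p'|a' b' f' g'] /(pcan_inj pickleK) //= [].
- by move/tree_of_tm_inj ->.
- move=> /tree_of_tm_inj_dep ef /tree_of_tm_inj_dep eg; case: ef (ef) => ea eb; subst => ef.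
  by move: ef eg => /existT_tm_inj -> /existT_tm_inj ->.
Qed.

Definition max_var_index (l : list (name S)) : nat :=
  fold_right (fun y m => if y is Var _ n then Nat.max n m else m) 0 l.

Lemma max_var_index_ge l b n : In (Var b n) l -> n <= max_var_index l.
Proof. by elim: l => [|y l IH] //= [->|/IH]; [|case: y]; lia. Qed.

Variable A0 : tm (Bo S) -> Prop.
Hypothesis A0_fin_sat : fin_sat A0.
Hypothesis A0_even : forall s, A0 s -> forall b n, In (Var b n) (vars s) -> Nat.Even n.
Variable enum : nat -> option task.
Hypothesis enum_surj : forall t, exists n, enum n = Some t.

Definition with_list (L : list (tm (Bo S))) : tm (Bo S) -> Prop := fun s => A0 s \/ In s L.

(* Odd, hence unused by [A0], and larger than every index in [f], [g], [L]. *)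
Definition fresh_index a b (f g : tm (Arr a b)) L : nat :=
  2 * max_var_index (vars f ++ vars g ++ flat_map (@vars S (Bo S)) L) + 1.

Definition witness a b (f g : tm (Arr a b)) k : tm (Bo S) :=
  neg (eqt (App f (Nm (Var a k) : tm a)) (App g (Nm (Var a k)))).

Definition step L t : list (tm (Bo S)) :=
  match t with
  | Decide p =>
      if excluded_middle_informative (fin_sat (extend (with_list L) p)) then p :: L else neg p :: L
  | Separate a b f g =>
      if excluded_middle_informative (fin_sat (extend (with_list L) (neg (eqt f g))))
      then witness f g (fresh_index f g L) :: neg (eqt f g) :: L
      else L
  end.

Lemma fresh_index_fresh a b (f g : tm (Arr a b)) L (c := Var a (fresh_index f g L)) :
  [/\ forall s, with_list L s -> ~ In c (vars s), ~ In c (vars f) & ~ In c (vars g)].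
Proof.
have not_in_sub l : incl l (vars f ++ vars g ++ flat_map (@vars S (Bo S)) L) -> ~ In c l.
  by move=> lsub /lsub /max_var_index_ge; rewrite /c /fresh_index; lia.
split=> [s [/A0_even Hs /Hs [m]|Ls]||]; first by rewrite /fresh_index; lia.
all: apply: not_in_sub => y Hy; rewrite !in_app_iff; try tauto.
by right; right; apply/in_flat_map; exists s.
Qed.

Lemma fin_sat_step L t : fin_sat (with_list L) -> fin_sat (with_list (step L t)).
Proof.
move=> HL; case: t => [p|a b f g] /=; case: excluded_middle_informative => Hext /=.
- by apply: fin_sat_sub Hext => s [|[<-|]]; rewrite /extend /with_list; tauto.
- have [//|Hneg] := fin_sat_extend p HL.
  by apply: fin_sat_sub Hneg => s [|[<-|]]; rewrite /extend /with_list; tauto.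
- have [Lc fc gc] := fresh_index_fresh f g L.
  by apply: fin_sat_sub (fin_sat_witness Hext Lc fc gc) => s [|[<-|[<-|]]];
    rewrite /extend /with_list; tauto.
- exact: HL.
Qed.

Fixpoint chain (n : nat) : list (tm (Bo S)) :=
  match n with
  | 0 => nil
  | Datatypes.S m => if enum m is Some t then step (chain m) t else chain m
  end.

Lemma chain_mono m n s : m <= n -> In s (chain m) -> In s (chain n).
Proof.
elim: n => [|n IH] mn Hs; first by move: Hs; have -> : m = 0 by lia.
case: (Nat.eq_dec m (Datatypes.S n)) => [e|mn'] /=; first by subst.
have {}Hs := IH ltac:(lia) Hs; case: (enum n) => [[p|a b f g]|] //=.
all: by case: excluded_middle_informative => _ //=; right; try right.
Qed.

Definition limit (s : tm (Bo S)) : Prop := A0 s \/ exists n, In s (chain n).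

Lemma fin_sat_limit : fin_sat limit.
Proof.
have Hchain n : fin_sat (with_list (chain n)).
  elim: n => [|n IH] /=; first by apply: fin_sat_sub A0_fin_sat => s [].
  by case: (enum n) => [t|//]; apply: fin_sat_step.
move=> l Hl; suff [N HN] : exists N, forall s, In s l -> with_list (chain N) s.
  exact: Hchain HN.
elim: l Hl => [|s l IH] Hl; first by exists 0.
have [N HN] := IH (fun s' Hs' => Hl s' (or_intror Hs')).
case: (Hl s (or_introl erefl)) => [A0s|[n Hn]].
- by exists N => s' /= [<-|/HN]; [left|].
- exists (Nat.max n N) => s' /= [<-|/HN [|Hs']]; [right|left|right] => //.
  + by apply: chain_mono Hn; lia.
  + by apply: chain_mono Hs'; lia.
Qed.

Lemma limit_complete p : limit p \/ limit (neg p).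
Proof.
have [n en] := enum_surj (Decide p).
suff : In p (chain (Datatypes.S n)) \/ In (neg p) (chain (Datatypes.S n)).
  by case=> H; [left|right]; right; exists (Datatypes.S n).
by rewrite /= en /=; case: excluded_middle_informative; [left|right]; left.
Qed.

Lemma limit_witness a b (f g : tm (Arr a b)) : limit (neg (eqt f g)) ->
  exists u : tm a, limit (neg (eqt (App f u) (App g u))).
Proof.
move=> Hfg; have [n en] := enum_surj (Separate f g).
have Hext : fin_sat (extend (with_list (chain n)) (neg (eqt f g))).
  by apply: fin_sat_sub fin_sat_limit => s [[A0s|Hs]|->] //; [left|right; exists n].
exists (Nm (Var a (fresh_index f g (chain n)))); right; exists (Datatypes.S n).
by rewrite /= en /=; case: excluded_middle_informative => //= _; left.
Qed.

End Lindenbaum.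

Lemma bool_bijective (T : Type) (f : T -> bool) (t0 t1 : T) :
  injective f -> f t0 = false -> f t1 = true -> bijective f.
Proof.
move=> f_inj f0 f1; exists (fun b => if b then t1 else t0) => [x|[]] //.
by apply: f_inj; case E: (f x); rewrite ?f0 ?f1.
Qed.

Section TermModel.
Variable S : countType.
Variables (nf : forall a : ty S, tm a -> tm a) (hat : subst S -> forall a : ty S, tm a -> tm a).
Hypotheses (Hnf : normalization nf) (Hhat : hat_spec nf hat).
Variable Th : tm (Bo S) -> Prop.
Hypothesis Th_complete : forall p, Th p \/ Th (neg p).
Hypothesis Th_fin_sat : fin_sat Th.
Hypothesis Th_witness : forall a b (f g : tm (Arr a b)),
  Th (neg (eqt f g)) -> exists u : tm a, Th (neg (eqt (App f u) (App g u))).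

Lemma Th_closed l p : (forall s, In s l -> Th s) ->
  (forall D (I : assignment D) tv, interpretation I -> logical I tv ->
     (forall s, In s l -> holds I tv s) -> holds I tv p) -> Th p.
Proof.
move=> Hl Hsem; case: (Th_complete p) => // Hnp.
have Hl' : forall s, In s (neg p :: l) -> Th s by move=> s [<-|/Hl].
have [D [I [HI [tv [Hlog Hh]]]]] := Th_fin_sat Hl'.
have /(holds_neg _ HI Hlog) := Hh _ (or_introl erefl); case.
by apply: Hsem => // s Hs; apply: Hh; right.
Qed.

Lemma Th_consistent p : Th p -> Th (neg p) -> False.
Proof.
move=> Hp Hnp; have Hl : forall s, In s (p :: neg p :: nil) -> Th s by move=> s [<-|[<-|[]]].
have [D [I [HI [tv [Hlog Hh]]]]] := Th_fin_sat Hl.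
have /(holds_neg _ HI Hlog) := Hh _ (or_intror (or_introl erefl)); apply.
by apply: Hh; left.
Qed.

Definition teq a (s t : tm a) : Prop := Th (eqt s t).

Lemma teq_sem l a (s t : tm a) : (forall p, In p l -> Th p) ->
  (forall D (I : assignment D) tv u v, interpretation I -> logical I tv ->
     (forall p, In p l -> holds I tv p) -> ev I s u -> ev I t v -> u = v) -> teq s t.
Proof.
move=> Hl Hsem; apply: (Th_closed Hl) => D I tv HI Hlog Hh.
have [u Hu] := HI _ s; have [v Hv] := HI _ t.
by apply/(holds_eqt Hlog Hu Hv); apply: (Hsem _ _ _ _ _ HI Hlog Hh).
Qed.

Lemma teq_refl a (s : tm a) : teq s s.
Proof. by apply: (@teq_sem nil) => // D I tv u v _ _ _; apply: ev_functional. Qed.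

Lemma teq_sym a (s t : tm a) : teq s t -> teq t s.
Proof.
move=> st; apply: (@teq_sem (eqt s t :: nil)) => [p [<-|[]] //|D I tv u v _ Hlog Hh Hu Hv].
by apply: esym; apply: eq_of_holds_eqt Hlog Hv Hu (Hh _ (or_introl erefl)).
Qed.

Lemma teq_trans a (s t r : tm a) : teq s t -> teq t r -> teq s r.
Proof.
move=> st tr; apply: (@teq_sem (eqt s t :: eqt t r :: nil)).
  by move=> p [<-|[<-|[]]].
move=> D I tv u v HI Hlog Hh Hu Hv; have [w Hw] := HI _ t.
rewrite (eq_of_holds_eqt Hlog Hu Hw (Hh _ (or_introl erefl))).
exact: eq_of_holds_eqt Hlog Hw Hv (Hh _ (or_intror (or_introl erefl))).
Qed.

Lemma teq_app a b (f f' : tm (Arr a b)) (s s' : tm a) :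
  teq f f' -> teq s s' -> teq (App f s) (App f' s').
Proof.
move=> ff' ss'; apply: (@teq_sem (eqt f f' :: eqt s s' :: nil)).
  by move=> p [<-|[<-|[]]].
move=> D I tv _ _ HI Hlog Hh /ev_inv [g [u [Hg [Hu ->]]]] /ev_inv [g' [u' [Hg' [Hu' ->]]]].
rewrite (eq_of_holds_eqt Hlog Hg Hg' (Hh _ (or_introl erefl))).
by rewrite (eq_of_holds_eqt Hlog Hu Hu' (Hh _ (or_intror (or_introl erefl)))).
Qed.

Lemma Th_teq (s t : tm (Bo S)) : teq s t -> Th s -> Th t.
Proof.
move=> st Hs; apply: (@Th_closed (eqt s t :: s :: nil)); first by move=> p [<-|[<-|[]]].
move=> D I tv HI Hlog Hh w Hw.
have [u Hu] := HI _ s; rewrite -(eq_of_holds_eqt Hlog Hu Hw (Hh _ (or_introl erefl))).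
exact: (Hh _ (or_intror (or_introl erefl))).
Qed.

Lemma teq_nf a (s t : tm a) : nf s = nf t -> teq s t.
Proof.
have [_ [_ [_ N4]]] := Hnf.
move=> st; apply: (@teq_sem nil) => // D I tv u v HI _ _ Hu Hv.
by apply: (ev_functional Hu); apply/(N4 _ _ HI); rewrite st; apply/(N4 _ _ HI).
Qed.

Lemma teq_iff (s t : tm (Bo S)) : (Th s <-> Th t) -> teq s t.
Proof.
move=> st.
case: (Th_complete s) => Hs.
- apply: (@teq_sem (s :: t :: nil)) => [p [<-|[<-|[]]] //|]; first exact/st.
  move=> D I tv u v _ Hlog Hh Hu Hv; apply: (logical_tv_inj Hlog).
  by rewrite (Hh _ (or_introl erefl) _ Hu) (Hh _ (or_intror (or_introl erefl)) _ Hv).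
- have Ht : Th (neg t).
    by case: (Th_complete t) => // /st /Th_consistent /(_ Hs).
  apply: (@teq_sem (neg s :: neg t :: nil)) => [p [<-|[<-|[]]] //|].
  move=> D I tv u v HI Hlog Hh Hu Hv; apply: (logical_tv_inj Hlog).
  have /(holds_neg _ HI Hlog) := Hh _ (or_introl erefl).
  have /(holds_neg _ HI Hlog) := Hh _ (or_intror (or_introl erefl)).
  by rewrite (holds_ev _ Hu) (holds_ev _ Hv); case: (tv u); case: (tv v).
Qed.

(* The quotient by [teq]: the class of [t] is represented by the predicate [teq t]. *)
Definition tclass a : Type := {P : tm a -> Prop | exists t, P = teq t}.

Definition tcl a (t : tm a) : tclass a := exist _ (teq t) (ex_intro _ t erefl).

Lemma tcl_eq a (s t : tm a) : tcl s = tcl t <-> teq s t.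
Proof.
split=> [/(f_equal (fun c => proj1_sig c t)) /= ->|st]; first exact: teq_refl.
apply: subset_eq_compat; apply: functional_extensionality => r.
by apply: propositional_extensionality; split; apply: teq_trans; [apply: teq_sym|].
Qed.

Definition rep a (c : tclass a) : tm a :=
  proj1_sig (constructive_indefinite_description _ (proj2_sig c)).

Lemma tcl_rep a (c : tclass a) : tcl (rep c) = c.
Proof.
rewrite /rep; case: constructive_indefinite_description => t /=.
by case: c => P HP /= e; apply: subset_eq_compat.
Qed.

Lemma rep_tcl a (t : tm a) : teq (rep (tcl t)) t.
Proof. by apply/tcl_eq; rewrite tcl_rep. Qed.

Definition tapp a b (c : tclass (Arr a b)) (d : tclass a) : tclass b :=
  tcl (App (rep c) (rep d)).

Lemma tapp_tcl a b (f : tm (Arr a b)) (u : tm a) : tapp (tcl f) (tcl u) = tcl (App f u).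
Proof. by apply/tcl_eq; apply: teq_app; apply: rep_tcl. Qed.

(* Extensionality is where the witnesses are needed. *)
Lemma tapp_ext a b (c c' : tclass (Arr a b)) : (forall d, tapp c d = tapp c' d) -> c = c'.
Proof.
rewrite -(tcl_rep c) -(tcl_rep c'); set f := rep c; set g := rep c' => fg.
apply/tcl_eq; case: (Th_complete (eqt f g)) => // /Th_witness [u Hu].
have := fg (tcl u); rewrite !tapp_tcl => /tcl_eq Hfg.
by case: (Th_consistent Hfg Hu).
Qed.

Lemma tclass_inhabited a : inhabited (tclass a).
Proof. exact: inhabits (tcl (Nm (Var a 0))). Qed.

Definition term_frame : frame S := Frame tapp_ext tclass_inhabited.

Definition subst_assignment (th : subst S) : assignment term_frame :=
  fun y => tcl (if th y is Some t then t else Nm y).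

Lemma subst_assignment_supd th x (u : tm (nty x)) :
  subst_assignment (supd th u) = upd (subst_assignment th) (x:=x) (tcl u).
Proof.
apply: functional_extensionality_dep => y.
case: (name_eq_dec x y) => [<-|xy].
- rewrite upd_eq /subst_assignment /supd; case: (name_eq_dec x x) => [e|//].
  by rewrite (UIP_dec (@name_eq_dec S) e erefl).
- by rewrite upd_neq // /subst_assignment /supd; case: name_eq_dec.
Qed.

(* The [Lam] case is axiom S3, read through [teq_nf]. *)
Lemma ev_subst_assignment th a (t : tm a) : ev (subst_assignment th) t (tcl (hat th t)).
Proof.
have [S1 [S2 [S3 _]]] := Hhat.
elim: t th => [x|a' b s IHs u IHu|x b s IHs] th.
- by rewrite S1; apply: ev_nm.
- by rewrite S2 -tapp_tcl; apply: ev_app.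
- apply: ev_lam => v; rewrite -(tcl_rep v) -subst_assignment_supd.
  have -> : Defs.app (f0:=term_frame) (tcl (hat th (Lam x s))) (tcl (rep v)) =
            tcl (hat (supd th (rep v)) s).
    by rewrite /= tapp_tcl; apply/tcl_eq; apply: teq_nf; apply: S3.
  exact: IHs.
Qed.

Definition term_assignment : assignment term_frame := subst_assignment (@subst_empty S).

Lemma term_interpretation : interpretation term_assignment.
Proof. by move=> a t; exists (tcl (hat (@subst_empty S) t)); apply: ev_subst_assignment. Qed.

Lemma ev_term_assignment a (t : tm a) w : ev term_assignment t w -> w = tcl t.
Proof.
have [_ [_ [_ S4]]] := Hhat.
move=> Hw; rewrite -(ev_functional (ev_subst_assignment _ t) Hw).
by apply/tcl_eq; apply: teq_nf; apply: S4.
Qed.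

Definition term_tv (c : tclass (Bo S)) : bool :=
  if excluded_middle_informative (Th (rep c)) then true else false.

Lemma term_tv_tcl (s : tm (Bo S)) : term_tv (tcl s) = true <-> Th s.
Proof.
have rs := rep_tcl s; rewrite /term_tv; case: excluded_middle_informative => Hs //.
- by split=> // _; apply: Th_teq Hs.
- by split=> // Ts; case: Hs; apply: Th_teq Ts; apply: teq_sym.
Qed.

Lemma term_tv_false (s : tm (Bo S)) : ~ Th s -> term_tv (tcl s) = false.
Proof. by move=> Hs; case E: (term_tv _) => //; move/term_tv_tcl: E. Qed.

Lemma term_tv_neg (s : tm (Bo S)) : term_tv (tcl (neg s)) = ~~ term_tv (tcl s).
Proof.
case: (Th_complete s) => Hs.
- by rewrite (iffRL (term_tv_tcl s) Hs) term_tv_false //; apply: Th_consistent.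
- by rewrite (iffRL (term_tv_tcl _) Hs) term_tv_false // => /Th_consistent; apply.
Qed.

Lemma term_logical : logical term_assignment term_tv.
Proof.
pose T := eqt (Nm (Var (Bo S) 0)) (Nm (Var (Bo S) 0)).
have HT : Th T by apply: teq_refl.
split; [|split].
- apply: (bool_bijective (t0 := tcl (neg T)) (t1 := tcl T)).
  + move=> c d; rewrite -(tcl_rep c) -(tcl_rep d) => cd; apply/tcl_eq/teq_iff.
    by rewrite -!term_tv_tcl cd.
  + by rewrite term_tv_neg (iffRL (term_tv_tcl _) HT).
  + exact/term_tv_tcl.
- by move=> c; rewrite -(tcl_rep c) /= tapp_tcl term_tv_neg.
- move=> a c d; rewrite -(tcl_rep c) -(tcl_rep d) tcl_eq.
  by rewrite /term_assignment /subst_assignment /= !tapp_tcl term_tv_tcl.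
Qed.

Lemma term_model : is_model term_assignment Th.
Proof.
split; first exact: term_interpretation.
exists term_tv; split; first exact: term_logical.
by move=> s Hs w /ev_term_assignment ->; apply/term_tv_tcl.
Qed.

Lemma tclass_countable a : countable_type (tclass a).
Proof.
have [code code_inj] := tm_countable a.
by exists (fun c => code (rep c)) => c d /code_inj cd; rewrite -(tcl_rep c) -(tcl_rep d) cd.
Qed.

End TermModel.

Theorem theorem10p3 (S : countType)
  (nf : forall a : ty S, tm a -> tm a) (hat : subst S -> forall a : ty S, tm a -> tm a)
  (Hnf : normalization nf) (Hhat : hat_spec nf hat)
  (A : tm (@Bo S) -> Prop) (HA : branch nf A)
  (Hfin : forall l : list (tm (@Bo S)), (forall s, In s l -> A s) ->
            satisfiable (fun s => In s l)) :
  exists (D : frame S) (I : assignment D),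
    is_model I A /\ forall a : ty S, countable_type (dom D a).
Proof.
have A0_fin_sat : fin_sat (ren_image A) := fin_sat_ren_image Hfin.
have A0_even s : ren_image A s -> forall b n, In (Var b n) (vars s) -> Nat.Even n.
  by case=> s0 [_ ->]; apply: ren_vars_even.
have [enum enum_surj] := countable_enumeration (task_countable S).
have Th_complete := limit_complete (ren_image A) enum_surj.
have Th_fin_sat := fin_sat_limit A0_fin_sat A0_even (enum := enum).
have Th_witness := limit_witness A0_fin_sat A0_even enum_surj.
have [J IJ] := ren_related_from (term_assignment Th_complete Th_fin_sat Th_witness).
exists (term_frame Th_complete Th_fin_sat Th_witness), J; split; last exact: tclass_countable.
apply/(is_model_ren _ IJ).
by apply: is_model_sub (term_model Hnf Hhat Th_complete Th_fin_sat Th_witness) => s; left.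
Qed.
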